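(* Let $P$ be the group of order $32$ with GAP identifier ${\rm SmallGroup}(32,7)$ (of the form $(C_8\rtimes C_2)\rtimes C_2$), and let $M\le P$ be a maximal subgroup with $M\cong C_2\times D_8$. Then $\psi(P)=167$ and $\psi(M)=39$. Consequently, for every odd positive integer $m$, the group $G=P\times C_m$ and its maximal subgroup $H=M\times C_m$ satisfy $$\psi(G)=167\,\psi(C_m)\ >\ 156\,\psi(C_m)=\psi(H)\,|G:H|^2,$$ so the inequality $\psi(G)\le \psi(H)|G:H|^2$ fails for the subgroup $H\le G$.
   Context: All groups are finite. For a finite group $G$, $\psi(G)=\sum_{g\in G} o(g)$, where $o(g)$ is the order of $g$. $C_n$ denotes the cyclic group of order $n$ and $D_8$ the dihedral group of order $8$. ${\rm SmallGroup}(32,7)$ refers to the group numbered 7 among groups of order 32 in the GAP Small Groups Library; it has a maximal subgroup isomorphic to $C_2\times D_8$. *)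

From HB Require Import structures.
From mathcomp Require Import all_boot all_fingroup all_solvable.
From mathcomp Require Import zmodp.

Set Implicit Arguments.
Unset Strict Implicit.
Unset Printing Implicit Defensive.

Local Open Scope group_scope.

Definition psi (gT : finGroupType) (A : {set gT}) : nat := (\sum_(g in A) #[g])%N.

(* A concrete model of SmallGroup(32,7) = (C8 : C2) : C2, given by the       *)
(* presentation  < a, b, c | a^8 = b^2 = c^2 = 1, b a b = a^5,               *)
(*                           c a c = a b, b c = c b >.                       *)
(* The element (i, j, k) stands for the normal form a^i b^j c^k.            *)
(* Multiplication rules: b a^i = a^(5i) b, c b = b c, and                    *)
(* c a^i = (ab)^i c  with (ab)^(2m) = a^(6m), (ab)^(2m+1) = a^(6m+1) b.      *)

Definition sg32_7 : Type := ('I_8 * bool * bool)%type.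
HB.instance Definition _ := Finite.on sg32_7.

Definition sg_one : sg32_7 := (ord0, false, false).

Definition sg_mul (x y : sg32_7) : sg32_7 :=
  let: (i, j, k) := x in
  let: (i2, j2, k2) := y in
  let f := if k then (6 * (i2 %/ 2) + odd i2)%N else nat_of_ord i2 in
  let e := if k then odd i2 else false in
  (Ordinal (ltn_pmod (i + 5 ^ j * f) (isT : 0 < 8)) : 'I_8,
   addb j (addb e j2), addb k k2).

Definition sg_elts : seq sg32_7 :=
  [seq ((Ordinal (ltn_pmod p.1 (isT : 0 < 8)) : 'I_8), p.2.1, p.2.2)
  | p <- [seq (i, jk) | i <- iota 0 8,
          jk <- [:: (false, false); (false, true); (true, false); (true, true)]]].

Lemma sg_eltsP (x : sg32_7) : x \in sg_elts.
Proof.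
case: x => [[[i Hi] j] k].
do 8 (case: i Hi => [|i] Hi; first by case: j; case: k; vm_compute).
by [].
Qed.

Definition sg_inv (x : sg32_7) : sg32_7 :=
  nth sg_one sg_elts (find (fun y => sg_mul y x == sg_one) sg_elts).

Lemma sg_mulA_b :
  all (fun x => all (fun y => all (fun z =>
     sg_mul x (sg_mul y z) == sg_mul (sg_mul x y) z) sg_elts) sg_elts) sg_elts.
Proof. vm_compute. reflexivity. Qed.

Lemma sg_mulA : associative sg_mul.
Proof.
move=> x y z.
have /allP/(_ x (sg_eltsP x))/allP/(_ y (sg_eltsP y))/allP/(_ z (sg_eltsP z))/eqP
  := sg_mulA_b.
by [].
Qed.

Lemma sg_mul1_b : all (fun x => sg_mul sg_one x == x) sg_elts.
Proof. vm_compute. reflexivity. Qed.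

Lemma sg_mul1 : left_id sg_one sg_mul.
Proof. by move=> x; have /allP/(_ x (sg_eltsP x))/eqP := sg_mul1_b. Qed.

Lemma sg_mulV_b : all (fun x => sg_mul (sg_inv x) x == sg_one) sg_elts.
Proof. vm_compute. reflexivity. Qed.

Lemma sg_mulV : left_inverse sg_one sg_inv sg_mul.
Proof. by move=> x; have /allP/(_ x (sg_eltsP x))/eqP := sg_mulV_b. Qed.

HB.instance Definition _ :=
  Finite_isGroup.Build sg32_7 sg_mulA sg_mul1 sg_mulV.

Definition P32_7 : {group sg32_7} := [set: sg32_7]%G.

Definition sg_a : sg32_7 := (Ordinal (isT : 1 < 8), false, false).
Definition sg_b : sg32_7 := (ord0, true, false).
Definition sg_c : sg32_7 := (ord0, false, true).

Definition C2xD8 := setX (Zp 2) 'D_8.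

Lemma sg_relations :
  [&& sg_a ^+ 8 == 1, sg_b ^+ 2 == 1, sg_c ^+ 2 == 1,
      sg_b * sg_a * sg_b == sg_a ^+ 5, sg_c * sg_a * sg_c == sg_a * sg_b
    & sg_b * sg_c == sg_c * sg_b].
Proof. vm_compute. reflexivity. Qed.

From HB Require Import structures.
From mathcomp Require Import all_boot all_fingroup all_solvable.
From mathcomp Require Import zmodp.

Set Implicit Arguments.
Unset Strict Implicit.
Unset Printing Implicit Defensive.

(* The element orders of the explicit model of P are obtained by evaluating
   the group law, which gives psi(P) = 167.  A subgroup M isomorphic to
   C_2 x D_8 has order 16 and exponent 4, while P has exactly 16 elements x
   with x^4 = 1; hence M is that set, and the same evaluation gives
   psi(M) = 39.  Element orders in a direct product of groups of coprime
   orders multiply, so psi(P x C_m) = 167 psi(C_m) and psi(M x C_m) =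
   39 psi(C_m) for odd m, while |P x C_m : M x C_m| = 2. *)

Local Open Scope group_scope.

Section ElementOrder.

Variable gT : finGroupType.

Lemma order_find (g : gT) n :
  #[g] <= n -> #[g] = (find (fun k => g ^+ k.+1 == 1) (iota 0 n)).+1.
Proof.
move=> le_g_n; set p := fun k => _.
have p_g : p #[g].-1 by rewrite /p prednK // expg_order.
have has_p : has p (iota 0 n).
  by apply/hasP; exists #[g].-1; rewrite // mem_iota /= prednK.
have lt_find : find p (iota 0 n) < n by rewrite has_find size_iota in has_p.
have p_find : p (find p (iota 0 n)).
  by have := nth_find 0 has_p; rewrite nth_iota.
apply/eqP; rewrite eqn_leq dvdn_leq ?order_dvdn ?p_find //=.
rewrite -[#[g]]prednK // ltnS leqNgt; apply/negP => lt_g_find.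
have := before_find 0 lt_g_find.
by rewrite nth_iota ?p_g // (ltn_trans lt_g_find).
Qed.

Lemma psi_gt0 (G : {group gT}) : 0 < psi G.
Proof. by rewrite /psi (bigD1 1) //= order1. Qed.

End ElementOrder.

Section DirectProduct.

Variables gT1 gT2 : finGroupType.

Lemma expg_pair (x : gT1) (y : gT2) n : (x, y) ^+ n = (x ^+ n, y ^+ n).
Proof. by elim: n => // n IHn; rewrite !expgS IHn. Qed.

Lemma order_pair (x : gT1) (y : gT2) : #[(x, y)] = lcmn #[x] #[y].
Proof.
have [xo yo] : x ^+ #[(x, y)] = 1 /\ y ^+ #[(x, y)] = 1.
  by have := expg_order (x, y); rewrite expg_pair => -[-> ->].
have xl : x ^+ lcmn #[x] #[y] = 1 by apply/eqP; rewrite -order_dvdn dvdn_lcml.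
have yl : y ^+ lcmn #[x] #[y] = 1 by apply/eqP; rewrite -order_dvdn dvdn_lcmr.
by apply/eqP; rewrite eqn_dvd dvdn_lcm !order_dvdn expg_pair xl yl xo yo !eqxx.
Qed.

Lemma exponent_setX_dvdn (A : {set gT1}) (B : {set gT2}) n :
  exponent A %| n -> exponent B %| n -> exponent (setX A B) %| n.
Proof.
move=> eA eB; apply/exponentP => -[x y] /setXP[Ax By].
by rewrite expg_pair (exponentP eA) ?(exponentP eB).
Qed.

Lemma psi_setX (A : {set gT1}) (B : {set gT2}) :
  {in A & B, forall x y, coprime #[x] #[y]} -> psi (setX A B) = (psi A * psi B)%N.
Proof.
move=> coAB; rewrite /psi big_distrl /=.
under [RHS]eq_bigr do rewrite big_distrr /=.
rewrite pair_big /=; apply: eq_big => [[x y] | [x y]]; first by rewrite in_setX.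
rewrite in_setX => /andP[Ax By] /=.
by rewrite order_pair -muln_lcm_gcd (eqP (coAB x y Ax By)) muln1.
Qed.

Lemma psi_setX_coprime (G1 : {group gT1}) (G2 : {group gT2})
    (A : {set gT1}) (B : {set gT2}) :
  coprime #|G1| #|G2| -> A \subset G1 -> B \subset G2 ->
  psi (setX A B) = (psi A * psi B)%N.
Proof.
move=> coG sAG sBG; apply: psi_setX => x y Ax By.
have dvd_x := order_dvdG (subsetP sAG x Ax).
exact: coprime_dvdl dvd_x (coprime_dvdr (order_dvdG (subsetP sBG y By)) coG).
Qed.

End DirectProduct.

Lemma exponent_2dihedral n : n > 1 -> exponent 'D_(2 ^ n) %| 2 ^ n.-1.
Proof.
move=> n_gt1; have isoD := isog_refl ('D_(2 ^ n))%G.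
have [[x t] genD _] := generators_2dihedral n_gt1 isoD.
have [[_ inv2 _] _ _ _ _] := dihedral2_structure n_gt1 genD isoD.
have [_ _ ox _] := genD.
apply/exponentP => y Dy; apply/eqP; rewrite -order_dvdn.
have [Xy | notXy] := boolP (y \in <[x]>).
  by rewrite -ox orderE cardSg // cycle_subG.
rewrite inv2 ?inE ?notXy //.
by apply: (@dvdn_exp2l 2 1); rewrite ltn_predRL.
Qed.

Lemma card_C2xD8 : #|C2xD8| = 16.
Proof. by rewrite cardsX card_Zp // (card_dihedral (isT : 1 < 4)). Qed.

Lemma exponent_C2xD8 : exponent C2xD8 %| 4.
Proof.
apply: exponent_setX_dvdn; last exact: (exponent_2dihedral (isT : 1 < 3)).
by rewrite (dvdn_trans (exponent_dvdn _)) // card_Zp.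
Qed.

Lemma big_sg32_7 (A : {set sg32_7}) (p : pred sg32_7) (F : sg32_7 -> nat) :
  A =i p -> \sum_(g in A) F g = \sum_(g <- sg_elts | p g) F g.
Proof.
move=> Ap; rewrite (eq_bigl p) //; apply/perm_big/uniq_perm.
- exact: index_enum_uniq.
- by vm_compute.
- by move=> g; rewrite mem_index_enum sg_eltsP.
Qed.

Lemma card_P32_7 : #|P32_7| = 32.
Proof.
rewrite -sum1_card (@big_sg32_7 _ predT) => [|g]; last by rewrite inE.
by rewrite unlock.
Qed.

Lemma order_sg32_7 (g : sg32_7) :
  #[g] = (find (fun k => g ^+ k.+1 == 1) (iota 0 32)).+1.
Proof.
have le_g_P : #[g] <= #|P32_7| by rewrite dvdn_leq ?order_dvdG ?inE.
by rewrite card_P32_7 in le_g_P; apply: order_find.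
Qed.

Lemma psi_P32_7 : psi P32_7 = 167.
Proof.
rewrite /psi (eq_bigr _ (fun g _ => order_sg32_7 g)).
rewrite (@big_sg32_7 _ predT) => [|g]; last by rewrite inE.
by rewrite unlock; vm_compute.
Qed.

Definition exp4_sg32_7 : {set sg32_7} := [set g | g ^+ 4 == 1].

Lemma card_exp4_sg32_7 : #|exp4_sg32_7| = 16.
Proof.
rewrite -sum1_card (@big_sg32_7 _ (fun g => g ^+ 4 == 1)) => [|g].
  by rewrite unlock; vm_compute.
by rewrite inE.
Qed.

Lemma psi_exp4_sg32_7 : psi exp4_sg32_7 = 39.
Proof.
rewrite /psi (eq_bigr _ (fun g _ => order_sg32_7 g)).
rewrite (@big_sg32_7 _ (fun g => g ^+ 4 == 1)) => [|g]; last by rewrite inE.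
by rewrite unlock; vm_compute.
Qed.

Lemma isog_C2xD8_eq_exp4 (M : {group sg32_7}) :
  M \isog C2xD8 -> M :=: exp4_sg32_7.
Proof.
move=> isoM; apply/eqP; rewrite eqEcard card_exp4_sg32_7 (card_isog isoM).
rewrite card_C2xD8 leqnn andbT; apply/subsetP => x Mx.
rewrite inE -order_dvdn (dvdn_trans (dvdn_exponent Mx)) //.
by rewrite (exponent_isog isoM) exponent_C2xD8.
Qed.

Local Close Scope group_scope.

Theorem mainTheorem6 :
  psi P32_7 = 167 /\
  forall M : {group sg32_7}, maximal M P32_7 -> M \isog C2xD8 ->
    psi M = 39 /\
    forall (cT : finGroupType) (C : {group cT}), cyclic C -> odd #|C| ->
      let G := setX P32_7 C in
      let H := setX M C in
      [/\ maximal H G,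
          psi G = 167 * psi C,
          psi H * #|G : H|%g ^ 2 = 156 * psi C
        & psi H * #|G : H|%g ^ 2 < psi G].
Proof.
split; first exact: psi_P32_7.
(* Neither the maximality of M (automatic at index 2) nor the cyclicity of C
   is needed. *)
move=> M _ isoM; have eqM := isog_C2xD8_eq_exp4 isoM.
have psiM : psi M = 39 by rewrite eqM psi_exp4_sg32_7.
split=> // cT C _ oddC G H.
have sHG : H \subset G by rewrite setXS ?subsetT.
have iHG : #|G : H|%g = 2.
  rewrite -divgS // !cardsX card_P32_7 eqM card_exp4_sg32_7.
  by rewrite -[32]/(2 * 16) -mulnA mulnK ?muln_gt0 ?cardG_gt0.
have coPC : coprime #|P32_7| #|C|.
  by rewrite card_P32_7 -[32]/(2 ^ 5) coprime_pexpl // coprime2n.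
have psiG : psi G = 167 * psi C.
  by rewrite (psi_setX_coprime coPC) ?subsetT // psi_P32_7.
have psiH : psi H = 39 * psi C.
  by rewrite (psi_setX_coprime coPC) ?subsetT // psiM.
rewrite iHG psiG psiH mulnAC; split=> //.
- by apply: p_index_maximal; rewrite ?iHG.
- by rewrite ltn_pmul2r ?psi_gt0.
Qed.
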